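(* Under the setting in the context, assume that for every $r\in\mathcal U^{(1)}_\varepsilon$ the maximum $\max_{\pi\in\Pi_\rho}J_r(\pi)$ is attained, and let $\Pi_\rho^\star(\mathcal U^{(1)}_\varepsilon):=\bigcup_{r\in\mathcal U^{(1)}_\varepsilon}\arg\max_{\pi\in\Pi_\rho}J_r(\pi)$ and $\mathcal C_{\infty,\mathrm{rel}}(\mathcal U^{(1)}_\varepsilon,\pi;\mu,\mathcal D):=\sup_{\beta\in\Pi_\rho^\star(\mathcal U^{(1)}_\varepsilon)}C_{\infty,\mathrm{rel}}(\beta,\pi;\mu,\mathcal D)$. Suppose the true reward $r^\star\in\mathcal U^{(1)}_\varepsilon$, let $\pi_\rho^\star\in\arg\max_{\pi\in\Pi_\rho}J_{r^\star}(\pi)$, and let $$\pi_\rho^{\mathrm{DRRO}}\in\arg\min_{\pi\in\Pi_\rho}\ \sup_{r\in\mathcal U^{(1)}_\varepsilon}\Big[\max_{\beta\in\Pi_\rho}J_r(\beta)-J_r(\pi)\Big]$$ (assumed to exist). Then $$J_{r^\star}(\pi_\rho^\star)-J_{r^\star}(\pi_\rho^{\mathrm{DRRO}})\le2\varepsilon\,\mathcal C_{\infty,\mathrm{rel}}(\mathcal U^{(1)}_\varepsilon,\pi_\rho^\star;\mu,\mathcal D).$$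
   Context: Setting: prompts $x\sim\mathcal D$ on a space $\mathcal X$; a finite response set $\mathcal Y$; reward functions $r:\mathcal X\times\mathcal Y\to\mathbb R$ (measurable, with the expectations below finite), $r(x)\in\mathbb R^{\mathcal Y}$ the promptwise vector; $\hat r$ a fixed proxy reward. $\Pi_\rho$ is a nonempty set of policies (a local policy class); each $\pi\in\Pi_\rho$ has a bounded measurable linear representation $z_\pi(x)\in\mathbb R^{\mathcal Y}$ (e.g. $z_\pi(x)=\pi(\cdot\mid x)$) with $J_r(\pi)=\mathbb E_{x\sim\mathcal D}[\langle z_\pi(x),r(x)\rangle]$. For each $x$, $\mu_x$ is a probability distribution on $\mathcal Y$ with $\mu_x(y)>0$ for all $y$. Weighted norms: $\|e\|_{1,\mu_x}:=\sum_y\mu_x(y)|e(y)|$, $\|v\|_{\infty,\mu_x^{-1}}:=\max_y|v(y)|/\mu_x(y)$. For $\varepsilon>0$, $\mathcal U^{(1)}_\varepsilon:=\{r:\ \mathbb E_{x\sim\mathcal D}[\|r(x)-\hat r(x)\|_{1,\mu_x}]\le\varepsilon\}$. Relative integrated concentrability: $C_{\infty,\mathrm{rel}}(\beta,\pi;\mu,\mathcal D):=\operatorname{ess\,sup}_{x\sim\mathcal D}\|z_\beta(x)-z_\pi(x)\|_{\infty,\mu_x^{-1}}$. *)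

From HB Require Import structures.
From mathcomp Require Import all_boot all_order all_algebra.
From mathcomp Require Import all_classical all_reals all_analysis.
From mathcomp Require Import ess_sup_inf.
Set Implicit Arguments. Unset Strict Implicit. Unset Printing Implicit Defensive.
Import Order.TTheory GRing.Theory Num.Theory.
Import numFieldNormedType.Exports.
Local Open Scope classical_set_scope.
Local Open Scope ring_scope.

Section RLHF.
Context {d : measure_display} {X : measurableType d} {R : realType} {Y : finType}.

Definition dotY (e v : Y -> R) : R := \sum_(y : Y) e y * v y.

Definition norm1w (mu : Y -> R) (e : Y -> R) : R := \sum_(y : Y) mu y * `|e y|.

(* ||v||_{infty,mu^{-1}} = max_y |v(y)| / mu(y)  (all terms are >= 0) *)
Definition normInfw (mu : Y -> R) (v : Y -> R) : R :=
  \big[Num.max/0]_(y : Y) (`|v y| / mu y).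

(* J_r(pi) = E_{x ~ D} [ <z_pi(x), r(x)> ] (real-valued; finite for admissible r) *)
Definition Jr (P : probability X R) (z : X -> Y -> R) (r : X -> Y -> R) : R :=
  fine (\int[P]_x (dotY (z x) (r x))%:E)%E.

Definition admissible_reward (P : probability X R) {Pol : Type} (Pi : set Pol)
  (z : Pol -> X -> Y -> R) (r : X -> Y -> R) : Prop :=
  (forall y, measurable_fun setT (fun x => r x y)) /\
  (forall pi, Pi pi -> P.-integrable setT (fun x => (dotY (z pi x) (r x))%:E)).

Definition U1 (P : probability X R) {Pol : Type} (Pi : set Pol)
  (z : Pol -> X -> Y -> R) (mu : X -> Y -> R) (rhat : X -> Y -> R) (eps : R)
  : set (X -> Y -> R) :=
  [set r | admissible_reward P Pi z r /\
     (\int[P]_x (norm1w (mu x) (fun y => r x y - rhat x y))%:E <= eps%:E)%E].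

Definition is_argmax (P : probability X R) {Pol : Type} (Pi : set Pol)
  (z : Pol -> X -> Y -> R) (r : X -> Y -> R) (pi : Pol) : Prop :=
  Pi pi /\ forall beta, Pi beta -> Jr P (z beta) r <= Jr P (z pi) r.

Definition PiStar (P : probability X R) {Pol : Type} (Pi : set Pol)
  (z : Pol -> X -> Y -> R) (U : set (X -> Y -> R)) : set Pol :=
  [set pi | exists2 r, U r & is_argmax P Pi z r pi].

Definition Crel (P : probability X R) {Pol : Type} (z : Pol -> X -> Y -> R)
  (mu : X -> Y -> R) (beta pi : Pol) : \bar R :=
  ess_sup P (fun x => (normInfw (mu x) (fun y => z beta x y - z pi x y))%:E).

Definition CrelU (P : probability X R) {Pol : Type} (Pi : set Pol)
  (z : Pol -> X -> Y -> R) (mu : X -> Y -> R) (U : set (X -> Y -> R)) (pi : Pol)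
  : \bar R :=
  ereal_sup [set Crel P z mu beta pi | beta in PiStar P Pi z U].

Definition worst_regret (P : probability X R) {Pol : Type} (Pi : set Pol)
  (z : Pol -> X -> Y -> R) (U : set (X -> Y -> R)) (pi : Pol) : \bar R :=
  ereal_sup [set (ereal_sup [set (Jr P (z beta) r)%:E | beta in Pi]
                  - (Jr P (z pi) r)%:E)%E | r in U].

End RLHF.

(** The robust policy has worst-case regret no larger than that of [pi_star],
    so it suffices to bound, for every [r] in the ball, the regret
    [J_r(beta) - J_r(pi_star)] of [pi_star] against a maximiser [beta] of [J_r].
    Since [pi_star] beats [beta] under the true reward [r_star], this regret is at
    most the shift [E <z_beta - z_pi_star, r - r_star>] of the regret between the
    two rewards.  The weighted Hölder inequality bounds the integrand by
    [||z_beta - z_pi_star||_{inf,mu^-1} ||r - r_star||_{1,mu}]; the first factor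
    is a.e. at most its essential supremum, and by the triangle inequality
    through [rhat], [E ||r - r_star||_{1,mu} <= 2 eps]. *)

From HB Require Import structures.
From mathcomp Require Import all_boot all_order all_algebra.
From mathcomp Require Import all_classical all_reals all_analysis.
From mathcomp Require Import ess_sup_inf measurable_realfun ring lra.
Import Order.TTheory GRing.Theory Num.Theory.
Local Open Scope classical_set_scope.
Local Open Scope ring_scope.

Section WeightedNorms.
Context {R : realType} {Y : finType}.
Variable mu : Y -> R.
Hypothesis mu_gt0 : forall y, 0 < mu y.

Lemma normInfw_ge0 (v : Y -> R) : 0 <= normInfw mu v.
Proof.
apply: (big_ind (fun t => 0 <= t)) => //.
- by move=> a b a_ge0 b_ge0; rewrite le_max a_ge0.
- by move=> y _; rewrite divr_ge0 // ltW.
Qed.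

Lemma norm1w_ge0 (v : Y -> R) : 0 <= norm1w mu v.
Proof. by apply: sumr_ge0 => y _; rewrite mulr_ge0 // ltW. Qed.

Lemma normr_dotY_le (e v : Y -> R) : `|dotY e v| <= normInfw mu e * norm1w mu v.
Proof.
rewrite /dotY /norm1w mulr_sumr; apply: (le_trans (ler_norm_sum _ _ _)).
apply: ler_sum => y _; rewrite normrM mulrA ler_wpM2r //.
have e_le : `|e y| / mu y <= normInfw mu e.
  exact: (le_bigmax 0 (fun y => `|e y| / mu y) y).
by rewrite -[`|e y|](divfK (lt0r_neq0 (mu_gt0 y))) ler_wpM2r // ltW.
Qed.

Lemma norm1w_sub_triangle (a b c : Y -> R) :
  norm1w mu (fun y => a y - b y) <=
  norm1w mu (fun y => a y - c y) + norm1w mu (fun y => b y - c y).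
Proof.
rewrite /norm1w -big_split /=; apply: ler_sum => y _.
rewrite -mulrDr ler_wpM2l ?(ltW (mu_gt0 y)) //.
have -> : a y - b y = (a y - c y) - (b y - c y) by ring.
exact: ler_normB.
Qed.

End WeightedNorms.

Lemma dotY_subl_subr {R : realType} {Y : finType} (a b u v : Y -> R) :
  dotY (fun y => a y - b y) (fun y => u y - v y) =
  dotY a u - dotY b u - (dotY a v - dotY b v).
Proof. by rewrite /dotY -!sumrB; apply: eq_bigr => y _; ring. Qed.

Section RewardShift.
Context {d : measure_display} {X : measurableType d} {R : realType} {Y : finType}.
Context {P : probability X R} {mu : X -> Y -> R}.
Hypothesis mu_gt0 : forall x y, 0 < mu x y.
Hypothesis measurable_mu : forall y, measurable_fun setT (fun x => mu x y).

Lemma measurable_norm1w (v : X -> Y -> R) :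
  (forall y, measurable_fun setT (fun x => v x y)) ->
  measurable_fun setT (fun x => norm1w (mu x) (v x)).
Proof.
move=> mv; apply: measurable_sum => y.
apply: measurable_funM => //.
exact (measurableT_comp (@normr_measurable _ _) (mv y)).
Qed.

Lemma abse_integral_dotY_le (e v : X -> Y -> R) (c : R) : 0 <= c ->
  (forall y, measurable_fun setT (fun x => v x y)) ->
  P.-integrable setT (fun x => (dotY (e x) (v x))%:E) ->
  {ae P, forall x, normInfw (mu x) (e x) <= c} ->
  (`|\int[P]_x (dotY (e x) (v x))%:E| <= c%:E * \int[P]_x (norm1w (mu x) (v x))%:E)%E.
Proof.
move=> c_ge0 mv idot e_le.
have mn := measurable_norm1w _ mv.
apply: (le_trans (le_abse_integral P measurableT (measurable_int _ idot))).
rewrite -ge0_integralZl //; last first.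
- by move=> x _; rewrite lee_fin (norm1w_ge0 _ (mu_gt0 x)).
- exact/measurable_EFinP.
apply: ae_ge0_le_integral => //.
- exact: measurable_int (integrable_abse idot).
- by move=> x _; rewrite -EFinM lee_fin mulr_ge0 // (norm1w_ge0 _ (mu_gt0 x)).
- exact/measurable_EFinP/measurable_funM.
apply: filterS e_le => x x_le _; rewrite -EFinM lee_fin.
apply: (le_trans (normr_dotY_le _ (mu_gt0 x) _ _)).
by rewrite ler_wpM2r // (norm1w_ge0 _ (mu_gt0 x)).
Qed.

Lemma integral_norm1w_sub_le {Pol : Type} {Pi : set Pol} {z : Pol -> X -> Y -> R}
    {rhat r r' : X -> Y -> R} {eps : R} :
  (forall y, measurable_fun setT (fun x => rhat x y)) ->
  U1 P Pi z mu rhat eps r -> U1 P Pi z mu rhat eps r' ->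
  (\int[P]_x (norm1w (mu x) (fun y => r x y - r' x y))%:E <= (2 * eps)%:E)%E.
Proof.
move=> mrhat [[mr _] r_near] [[mr' _] r'_near].
have mdist (s : X -> Y -> R) : (forall y, measurable_fun setT (fun x => s x y)) ->
    measurable_fun setT (fun x => (norm1w (mu x) (fun y => s x y - rhat x y))%:E).
  move=> ms; apply/measurable_EFinP/measurable_norm1w => y.
  exact: measurable_funB.
apply: (le_trans (y := \int[P]_x ((norm1w (mu x) (fun y => r x y - rhat x y))%:E
                    + (norm1w (mu x) (fun y => r' x y - rhat x y))%:E))%E).
  apply: ge0_le_integral => //.
  - by move=> x _; rewrite lee_fin (norm1w_ge0 _ (mu_gt0 x)).
  - apply/measurable_EFinP/measurable_norm1w => y.
    exact: measurable_funB.
  - exact: emeasurable_funD (mdist _ mr) (mdist _ mr').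
  - by move=> x _; rewrite -EFinD lee_fin (norm1w_sub_triangle _ (mu_gt0 x)).
have dist_ge0 (s : X -> Y -> R) x :
    (0 <= (norm1w (mu x) (fun y => s x y - rhat x y))%:E)%E.
  by rewrite lee_fin (norm1w_ge0 _ (mu_gt0 x)).
rewrite ge0_integralD //; [|exact: mdist..].
by rewrite mulr2n mulrDl mul1r EFinD leeD.
Qed.

Section RegretShift.
Context {Pol : Type} {Pi : set Pol} {z : Pol -> X -> Y -> R} {r r' : X -> Y -> R}.
Context {beta pi : Pol}.
Hypotheses (r_adm : admissible_reward P Pi z r) (r'_adm : admissible_reward P Pi z r').
Hypotheses (Pi_beta : Pi beta) (Pi_pi : Pi pi).

Let shift x := dotY (fun y => z beta x y - z pi x y) (fun y => r x y - r' x y).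

Let shiftE : (fun x => (shift x)%:E) = (fun x =>
  ((dotY (z beta x) (r x))%:E - (dotY (z pi x) (r x))%:E)
  - ((dotY (z beta x) (r' x))%:E - (dotY (z pi x) (r' x))%:E))%E.
Proof. by apply/funext => x; rewrite /shift dotY_subl_subr !EFinB. Qed.

Let ibr := proj2 r_adm beta Pi_beta.
Let ipr := proj2 r_adm pi Pi_pi.
Let ibr' := proj2 r'_adm beta Pi_beta.
Let ipr' := proj2 r'_adm pi Pi_pi.

Lemma integrable_dotY_shift : P.-integrable setT (fun x => (shift x)%:E).
Proof. by rewrite shiftE; apply: integrableB => //; exact: integrableB. Qed.

Lemma integral_dotY_shift : (\int[P]_x (shift x)%:E =
  ((Jr P (z beta) r - Jr P (z pi) r) - (Jr P (z beta) r' - Jr P (z pi) r'))%:E)%E.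
Proof.
rewrite shiftE integralB //; [|exact: integrableB..].
by rewrite !integralB // /Jr !EFinB !fineK //; exact: integrable_fin_num.
Qed.

End RegretShift.

Lemma Jr_regret_le_Crel {Pol : Type} {Pi : set Pol} {z : Pol -> X -> Y -> R}
    {rhat r r' : X -> Y -> R} {eps : R} {beta pi : Pol} :
  (forall y, measurable_fun setT (fun x => rhat x y)) -> 0 < eps ->
  U1 P Pi z mu rhat eps r -> U1 P Pi z mu rhat eps r' -> Pi beta -> Pi pi ->
  Jr P (z beta) r' <= Jr P (z pi) r' ->
  ((Jr P (z beta) r - Jr P (z pi) r)%:E <= (2 * eps)%:E * Crel P z mu beta pi)%E.
Proof.
move=> mrhat eps_gt0 Ur Ur' Pi_beta Pi_pi pi_beats_beta.
have P_gt0 : (0 < P [set: X])%E by rewrite probability_setT.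
have Crel_ge0 : (0 <= Crel P z mu beta pi)%E.
  apply: ess_sup_gee P_gt0 _.
  by apply: nearW => x; rewrite lee_fin (normInfw_ge0 _ (mu_gt0 x)).
have Crel_ae := ess_sup_ge P
  (fun x => (normInfw (mu x) (fun y => z beta x y - z pi x y))%:E).
rewrite /Crel in Crel_ge0 Crel_ae *.
case: ess_sup Crel_ge0 Crel_ae => [c | _ _ | //]; last first.
  by rewrite mulry gtr0_sg ?mul1e ?leey // mulr_gt0.
rewrite lee_fin => c_ge0 Crel_ae.
have [r_adm _] := Ur; have [r'_adm _] := Ur'.
apply: (@le_trans _ _ ((Jr P (z beta) r - Jr P (z pi) r)
    - (Jr P (z beta) r' - Jr P (z pi) r'))%:E); first by rewrite lee_fin; lra.
rewrite -(integral_dotY_shift r_adm r'_adm Pi_beta Pi_pi).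
apply: (le_trans (lee_abs _)).
apply: (le_trans (abse_integral_dotY_le _ _ _ c_ge0 _ _ _)).
- by move=> y; apply: measurable_funB; [exact: r_adm.1|exact: r'_adm.1].
- exact: (integrable_dotY_shift r_adm r'_adm Pi_beta Pi_pi).
- by apply: filterS Crel_ae => x; rewrite lee_fin.
rewrite muleC lee_wpmul2r ?lee_fin //.
exact: (integral_norm1w_sub_le mrhat Ur Ur').
Qed.
End RewardShift.

Section WorstCaseRegret.
Context {d : measure_display} {X : measurableType d} {R : realType} {Y : finType}.
Context {P : probability X R} {Pol : Type} {Pi : set Pol} {z : Pol -> X -> Y -> R}.

Lemma ereal_sup_Jr_argmax {r : X -> Y -> R} {beta : Pol} :
  is_argmax P Pi z r beta ->
  ereal_sup [set (Jr P (z b) r)%:E | b in Pi] = (Jr P (z beta) r)%:E.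
Proof.
case=> Pi_beta beta_max; apply/eqP; rewrite eq_le; apply/andP; split.
- by apply: ge_ereal_sup => _ [b Pi_b <-]; rewrite lee_fin beta_max.
- by apply: ereal_sup_ubound; exists beta.
Qed.

Lemma Jr_gap_le_worst_regret {U : set (X -> Y -> R)} {r : X -> Y -> R} {beta pi : Pol} :
  U r -> Pi beta ->
  ((Jr P (z beta) r - Jr P (z pi) r)%:E <= worst_regret P Pi z U pi)%E.
Proof.
move=> Ur Pi_beta; rewrite EFinB.
apply: le_trans (ereal_sup_ubound (ex_intro2 _ _ r Ur erefl)).
by rewrite leeB // ereal_sup_ubound //; exists beta.
Qed.

Lemma Crel_le_CrelU {mu : X -> Y -> R} {U : set (X -> Y -> R)} {r : X -> Y -> R}
    {beta pi : Pol} :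
  U r -> is_argmax P Pi z r beta ->
  (Crel P z mu beta pi <= CrelU P Pi z mu U pi)%E.
Proof. by move=> Ur beta_max; apply: ereal_sup_ubound; exists beta => //; exists r. Qed.

End WorstCaseRegret.

Theorem mainTheorem16
  (d : measure_display) (X : measurableType d) (R : realType) (Y : finType)
  (P : probability X R)
  (Pol : Type) (Pi : set Pol) (z : Pol -> X -> Y -> R)
  (mu : X -> Y -> R) (rhat rstar : X -> Y -> R) (eps : R)
  (piStar piDRRO : Pol) :
  Pi !=set0 ->
  (forall pi, Pi pi -> forall y, measurable_fun setT (fun x => z pi x y)) ->
  (forall pi, Pi pi -> exists M : R, forall x y, `|z pi x y| <= M) ->
  (forall x y, 0 < mu x y) ->
  (forall x, \sum_(y : Y) mu x y = 1) ->
  (forall y, measurable_fun setT (fun x => mu x y)) ->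
  admissible_reward P Pi z rhat ->
  0 < eps ->
  (forall r, U1 P Pi z mu rhat eps r -> exists pi, is_argmax P Pi z r pi) ->
  U1 P Pi z mu rhat eps rstar ->
  is_argmax P Pi z rstar piStar ->
  Pi piDRRO ->
  (forall pi, Pi pi ->
     (worst_regret P Pi z (U1 P Pi z mu rhat eps) piDRRO
        <= worst_regret P Pi z (U1 P Pi z mu rhat eps) pi)%E) ->
  ((Jr P (z piStar) rstar - Jr P (z piDRRO) rstar)%:E
     <= (2 * eps)%:E * CrelU P Pi z mu (U1 P Pi z mu rhat eps) piStar)%E.
Proof.
move=> _ _ _ mu_gt0 _ mmu [mrhat _] eps_gt0 argmax_ex Ustar piStar_max _ DRRO_opt.
have [Pi_piStar piStar_best] := piStar_max.
apply: (le_trans (Jr_gap_le_worst_regret Ustar Pi_piStar)).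
apply: (le_trans (DRRO_opt _ Pi_piStar)).
apply: ge_ereal_sup => _ [r Ur <-].
have [beta beta_max] := argmax_ex r Ur.
rewrite (ereal_sup_Jr_argmax beta_max) -EFinB.
apply: (le_trans (Jr_regret_le_Crel mu_gt0 mmu mrhat eps_gt0 Ur Ustar beta_max.1
  Pi_piStar (piStar_best _ beta_max.1))).
apply: lee_wpmul2l; first by rewrite lee_fin mulr_ge0 // ltW.
exact: Crel_le_CrelU Ur beta_max.
Qed.
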